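(* Let $Y(\mathbb{R}^n)$ be a translation-invariant Banach function space and $\varphi$ a nonincreasing function such that $\varphi(r)\to0$ as $r\to+\infty$ and $r\varphi(r)$ is nondecreasing for $r\ge1$. Suppose $w:\mathbb{R}^n\to[0,\infty]$ is a weight with $w,1/w\in L^\infty_{\rm loc}(\mathbb{R}^n)$ and there exist $C_0,C_1>0$, $\gamma>0$ and $\theta\in\mathbb{R}^n$ with $|\theta|=1$ such that \[ C_0\exp(|x|\varphi(|x|))\le w(x)\le C_1\exp(|x|\varphi(|x|))\quad\text{whenever } \Big|\frac{x}{|x|}-\theta\Big|<\gamma,\ |x|\ge1. \] Then $X(\mathbb{R}^n)=Y(\mathbb{R}^n,w)$ satisfies the weak doubling property and there exists a constant $C>0$ such that $\|\chi_{B(0,R)}\|_{X(\mathbb{R}^n)}\ge C\exp(R\varphi(R))$ for all sufficiently large $R$.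
   Context: Banach function spaces: let $\mathfrak{M}^+(\mathbb{R}^n)$ be the set of measurable functions with values in $[0,\infty]$. A Banach function norm $\rho:\mathfrak{M}^+\to[0,\infty]$ satisfies, for all $f,g,f_j\in\mathfrak{M}^+$, $a\ge0$, measurable $E$: (A1) $\rho(f)=0\iff f=0$ a.e., $\rho(af)=a\rho(f)$, $\rho(f+g)\le\rho(f)+\rho(g)$; (A2) $0\le g\le f$ a.e. implies $\rho(g)\le\rho(f)$; (A3) $0\le f_j\uparrow f$ a.e. implies $\rho(f_j)\uparrow\rho(f)$; (A4) $|E|<\infty$ implies $\rho(\chi_E)<\infty$; (A5) $|E|<\infty$ implies $\int_Ef\le C_E\rho(f)$ with $C_E$ independent of $f$. $Y(\mathbb{R}^n)$ is the set of measurable complex $f$ with $\rho(|f|)<\infty$, $\|f\|_Y=\rho(|f|)$. $Y$ is translation-invariant if $\|u(\cdot-y)\|_Y=\|u\|_Y$ for all $y$, $u\in Y$. A weight is a measurable $w$ with $0<w<\infty$ a.e.; $Y(\mathbb{R}^n,w)=\{f: fw\in Y\}$ with $\|f\|_{Y(\mathbb{R}^n,w)}=\|fw\|_Y$. Weak doubling property: a Banach function space $Z(\mathbb{R}^n)$ has it if there is $\tau>1$ with $\liminf_{R\to\infty}\big(\inf_{y\in\mathbb{R}^n}\|\chi_{B(y,\tau R)}\|_{Z}/\|\chi_{B(y,R)}\|_{Z}\big)<\infty$, where $B(y,R)$ is the open ball of radius $R$ centered at $y$. *)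

From HB Require Import structures.
From mathcomp Require Import all_boot all_order all_algebra.
From mathcomp Require Import all_classical all_reals all_analysis.
From mathcomp Require Import measurable_realfun.
Set Implicit Arguments. Unset Strict Implicit. Unset Printing Implicit Defensive.
Import Order.TTheory GRing.Theory Num.Theory.
Import numFieldNormedType.Exports.
Local Open Scope classical_set_scope.
Local Open Scope ring_scope.

(* R^n is represented by row vectors 'rV[R]_n.  [Rn R n] is R^n equipped with
   its Borel sigma-algebra (generated by the open sets). *)
Definition Rn (R : realType) (n : nat) := g_sigma_algebraType (@open 'rV[R]_n).

Definition enorm {R : realType} {n : nat} (x : 'rV[R]_n) : R :=
  Num.sqrt (\sum_(i < n) x 0 i ^+ 2).
Definition eball {R : realType} {n : nat} (y : 'rV[R]_n) (r : R) : set 'rV[R]_n :=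
  [set x | enorm (x - y) < r].

(* [mu] is Lebesgue measure on the Borel sets of R^n: the measure of every
   half-open box prod_i [a_i, b_i) is its volume (this determines mu uniquely). *)
Definition is_lebesgue {R : realType} {n : nat}
    (mu : {measure set (Rn R n) -> \bar R}) : Prop :=
  forall a b : 'rV[R]_n, (forall i, a 0 i <= b 0 i) ->
    mu [set x : 'rV[R]_n | forall i, a 0 i <= x 0 i < b 0 i]
    = (\prod_(i < n) (b 0 i - a 0 i))%:E.

(* The Lebesgue sigma-algebra (completion of the Borel one): R^n with the
   Caratheodory-measurable sets of the outer measure induced by mu. *)
Notation LRn mu := (caratheodory_type (mu^*)%mu).

Section BFS.
Context {R : realType} {n : nat} (mu : {measure set (Rn R n) -> \bar R}).
Local Notation LRn := (LRn mu).

Definition leb : set LRn -> \bar R := @completed_measure_extension _ (Rn R n) R mu.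
HB.instance Definition _ := Measure.on leb.

Local Open Scope ereal_scope.

Definition chi (A : set 'rV[R]_n) : LRn -> \bar R := fun x => (\1_A x)%:E.

Definition Mplus (f : LRn -> \bar R) : Prop :=
  measurable_fun [set: LRn] f /\ forall x, 0 <= f x.

Definition banach_function_norm (rho : (LRn -> \bar R) -> \bar R) : Prop :=
  [/\
      (forall f, Mplus f -> (rho f = 0 <-> {ae leb, forall x, f x = 0})),
      (forall f (a : R), Mplus f -> (0 <= a)%R -> rho (fun x => a%:E * f x) = a%:E * rho f),
      (forall f g, Mplus f -> Mplus g -> rho (fun x => f x + g x) <= rho f + rho g),
      (forall f g, Mplus f -> Mplus g -> {ae leb, forall x, g x <= f x} -> rho g <= rho f) &
      [/\
      (forall f (fs : nat -> LRn -> \bar R), Mplus f -> (forall j, Mplus (fs j)) ->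
        {ae leb, forall x, nondecreasing_seq (fun j => fs j x) /\
                           (fun j => fs j x) @ \oo --> f x} ->
        nondecreasing_seq (fun j => rho (fs j)) /\ (fun j => rho (fs j)) @ \oo --> rho f),
      (forall E : set LRn, measurable E -> leb E < +oo -> rho (fun x => (\1_E x)%:E) < +oo) &
      (forall E : set LRn, measurable E -> leb E < +oo ->
        exists C : R, forall f, Mplus f -> \int[leb]_(x in E) f x <= C%:E * rho f)]].

(* Translation invariance of Y: ||u(. - y)||_Y = ||u||_Y for every u in Y
   (with ||u||_Y = rho(|u|)). *)
Definition translation_invariant (rho : (LRn -> \bar R) -> \bar R) : Prop :=
  forall (u : LRn -> R) (y : 'rV[R]_n), measurable_fun [set: LRn] u ->
    rho (fun x => (`|u x|)%:E) < +oo ->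
    rho (fun x => (`|u ((x : 'rV[R]_n) - y)|)%:E) = rho (fun x => (`|u x|)%:E).

Definition weight (w : LRn -> \bar R) : Prop :=
  [/\ measurable_fun [set: LRn] w, (forall x, 0 <= w x) &
      {ae leb, forall x, 0 < w x < +oo}].

Definition Linf_loc (g : LRn -> \bar R) : Prop :=
  measurable_fun [set: LRn] g /\
  forall r : R, exists M : R, {ae leb, forall x, (enorm (x : 'rV[R]_n) < r)%R -> `|g x| <= M%:E}.

(* the norm of X = Y(R^n, w): ||f||_X = ||f w||_Y = rho(|f| w) *)
Definition Xnorm (rho : (LRn -> \bar R) -> \bar R) (w : LRn -> \bar R)
    (f : LRn -> \bar R) : \bar R :=
  rho (fun x => `|f x| * w x).

End BFS.

Local Open Scope ereal_scope.

Definition liminf_pinfty {R : realType} (F : R -> \bar R) : \bar R :=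
  ereal_sup [set ereal_inf [set F r | r in [set r | (r0 <= r)%R]] | r0 in [set: R]].

(* Weak doubling property of a Banach function space Z, given through the map
   A |-> ||chi_A||_Z on subsets of R^n. *)
Definition weak_doubling {R : realType} {n : nat}
    (chinorm : set 'rV[R]_n -> \bar R) : Prop :=
  exists tau : R, (1 < tau)%R /\
    liminf_pinfty (fun r : R =>
      ereal_inf [set chinorm (eball y (tau * r)) / chinorm (eball y r) | y in [set: 'rV[R]_n]])
    < +oo.

From HB Require Import structures.
From mathcomp Require Import all_boot all_order all_algebra.
From mathcomp Require Import all_classical all_reals all_analysis.
From mathcomp Require Import measurable_realfun.
From mathcomp Require Import ring lra.
Set Implicit Arguments. Unset Strict Implicit. Unset Printing Implicit Defensive.
Import Order.TTheory GRing.Theory Num.Theory.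
Import numFieldNormedType.Exports.
Local Open Scope classical_set_scope.
Local Open Scope ring_scope.

(* By translation invariance, the indicators of all balls of a given radius
   have the same Y-norm, which is finite and positive since balls have finite
   positive Lebesgue measure; covering B(y, 2r) by a fixed number N of balls of
   radius r then shows that this norm is doubling.  Far out in the cone, at
   y = t theta with t large, the weight is comparable on B(y, 2r) to the single
   constant exp((t - 2r) phi(t - 2r)): r phi(r) is nondecreasing, and its
   increment over [t - 2r, t + 2r] is at most 4 r phi(t - 2r) <= 1 once
   phi(t - 2r) is small.  Hence ||chi_B(y,2r)||_X / ||chi_B(y,r)||_X <= C1 e N / C0.
   For the lower bound, the ball of radius d centred at (r - d) theta lies in
   B(0, r) and in the cone, where w >= C0 exp(r phi(r) - 2 d phi(1)). *)

Section EuclideanNorm.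
Context {R : realType} {n : nat}.
Implicit Types (x y : 'rV[R]_n) (r : R).

Lemma enorm_ge0 x : 0 <= enorm x.
Proof. exact: sqrtr_ge0. Qed.

Lemma sqr_enorm x : enorm x ^+ 2 = \sum_(i < n) x 0 i ^+ 2.
Proof. by rewrite sqr_sqrtr // sumr_ge0 // => i _; exact: sqr_ge0. Qed.

Lemma enorm_eq0 x : (enorm x == 0) = (x == 0).
Proof.
apply/idP/eqP => [|->]; last first.
  by rewrite /enorm big1 ?sqrtr0 // => i _; rewrite mxE expr0n.
rewrite -sqrf_eq0 sqr_enorm psumr_eq0 => [/allP x0|i _]; last exact: sqr_ge0.
by apply/rowP => i; apply/eqP; rewrite mxE -sqrf_eq0; exact: x0 (mem_index_enum i).
Qed.

Lemma enorm0 : enorm (0 : 'rV[R]_n) = 0.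
Proof. by apply/eqP; rewrite enorm_eq0. Qed.

Lemma enormZ a x : enorm (a *: x) = `|a| * enorm x.
Proof.
rewrite /enorm (eq_bigr (fun i => a ^+ 2 * x 0 i ^+ 2)) => [|i _]; last first.
  by rewrite mxE exprMn.
by rewrite -mulr_sumr sqrtrM ?sqr_ge0 // sqrtr_sqr.
Qed.

Lemma enorm_distC x y : enorm (x - y) = enorm (y - x).
Proof. by rewrite -opprB -scaleN1r enormZ normrN normr1 mul1r. Qed.

Lemma enorm_coord x i : `|x 0 i| <= enorm x.
Proof.
rewrite -sqrtr_sqr ler_sqrt ?sumr_ge0 // => [|j _]; last exact: sqr_ge0.
by rewrite (bigD1 i) //= lerDl sumr_ge0 // => j _; exact: sqr_ge0.
Qed.

Lemma enorm_lt_coord x r : 0 < r -> (forall i, `|x 0 i| <= r / n.+1%:R) ->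
  enorm x < r.
Proof.
move=> r0 xr; set c := r / n.+1%:R in xr *.
have c0 : 0 < c by rewrite divr_gt0.
rewrite -(gtr0_norm r0) -sqrtr_sqr ltr_sqrt ?exprn_gt0 //.
apply: (le_lt_trans (y := \sum_(i < n) c ^+ 2)).
  by apply: ler_sum => i _; have := xr i; rewrite ler_norml => /andP[? ?]; nra.
have -> : r = c * n.+1%:R by rewrite /c divfK // pnatr_eq0.
rewrite sumr_const card_ord -mulr_natr -natr1.
have : 0 <= n%:R :> R by [].
nra.
Qed.

(* Cauchy-Schwarz: for nonzero x, y, sum the termwise AM-GM inequalities
   2 (|y| x_i) (|x| y_i) <= (|y| x_i)^2 + (|x| y_i)^2. *)
Lemma dot_le_enorm x y : \sum_(i < n) x 0 i * y 0 i <= enorm x * enorm y.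
Proof.
have [->|x0] := eqVneq x 0.
  by rewrite big1 ?enorm0 ?mul0r // => i _; rewrite mxE mul0r.
have [->|y0] := eqVneq y 0.
  by rewrite big1 ?enorm0 ?mulr0 // => i _; rewrite mxE mulr0.
set A := enorm x; set B := enorm y.
have AB0 : 0 < 2 * (A * B).
  by rewrite !mulr_gt0 // lt_def enorm_eq0 ?x0 ?y0 enorm_ge0.
rewrite -(ler_pM2l AB0) mulr_sumr.
have -> : 2 * (A * B) * (A * B) =
    \sum_(i < n) (B ^+ 2 * x 0 i ^+ 2 + A ^+ 2 * y 0 i ^+ 2).
  by rewrite big_split /= -!mulr_sumr -!sqr_enorm -/A -/B; ring.
apply: ler_sum => i _.
have := sqr_ge0 (B * x 0 i - A * y 0 i); nra.
Qed.

Lemma enormD x y : enorm (x + y) <= enorm x + enorm y.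
Proof.
rewrite -(ger0_norm (addr_ge0 (enorm_ge0 x) (enorm_ge0 y))) -sqrtr_sqr.
rewrite ler_sqrt ?sqr_ge0 //.
rewrite (eq_bigr (fun i => x 0 i ^+ 2 + 2 * (x 0 i * y 0 i) + y 0 i ^+ 2)).
  rewrite !big_split /= -mulr_sumr -!sqr_enorm.
  have := dot_le_enorm x y; nra.
by move=> i _; rewrite mxE; ring.
Qed.

Lemma enorm_lerB x y : enorm x - enorm y <= enorm (x - y).
Proof. by have := enormD (x - y) y; rewrite subrK; lra. Qed.

End EuclideanNorm.

Section Balls.
Context {R : realType} {n : nat}.
Implicit Types (a b th x y : 'rV[R]_n) (r s t : R).

(* Write x / |x| - th = (|x|^-1 - t^-1) x + t^-1 (x - t th); both terms have
   norm less than s / t. *)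
Lemma eball_ray th x t s : enorm th = 1 -> 0 < s < t -> eball (t *: th) s x ->
  [/\ t - s < enorm x, enorm x < t + s &
      enorm ((enorm x)^-1 *: x - th) < 2 * s / t].
Proof.
move=> th1 /andP[s0 st]; rewrite /eball /= => xs.
have t0 : 0 < t by exact: lt_trans st.
have tth : enorm (t *: th) = t by rewrite enormZ th1 mulr1 gtr0_norm.
have xt : `|t - enorm x| < s.
  have := enorm_lerB x (t *: th); have := enorm_lerB (t *: th) x.
  by rewrite tth enorm_distC ltr_norml; lra.
have x0 : 0 < enorm x by move: xt; rewrite ltr_norml; lra.
split; [by move: xt; rewrite ltr_norml; lra..|].
have -> : (enorm x)^-1 *: x - th =
    ((enorm x)^-1 - t^-1) *: x + t^-1 *: (x - t *: th).
  by rewrite scalerBl scalerBr scalerA mulVf ?gt_eqF // scale1r addrA subrK.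
apply: (le_lt_trans (enormD _ _)); rewrite !enormZ.
have -> : `|(enorm x)^-1 - t^-1| * enorm x = `|t - enorm x| / t.
  have -> : (enorm x)^-1 - t^-1 = (t - enorm x) / (enorm x * t).
    by field; rewrite !gt_eqF.
  by rewrite normrM normfV normrM (gtr0_norm x0) (gtr0_norm t0); field; rewrite !gt_eqF.
rewrite [`|t^-1|]gtr0_norm ?invr_gt0 // [t^-1 * _]mulrC -mulrDl ltr_pM2r ?invr_gt0 //.
by rewrite -[2]/(1 + 1) mulrDl mul1r; exact: ltrD.
Qed.

Lemma eball_open y r : open (eball y r).
Proof.
rewrite openE => x xB; apply/nbhs_ballP.
have d0 : 0 < r - enorm (x - y) by rewrite subr_gt0.
exists ((r - enorm (x - y)) / n.+1%:R) => [|z /= [_ xz]]; first by rewrite /= divr_gt0.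
have zx : enorm (z - x) < r - enorm (x - y).
  by apply: enorm_lt_coord => // i; have := xz 0 i; rewrite /ball /= !mxE distrC => /ltW.
by have := enormD (z - x) (x - y); rewrite addrA subrK /eball /=; lra.
Qed.

Definition box (a b : 'rV[R]_n) : set 'rV[R]_n :=
  [set x | forall i, a 0 i <= x 0 i < b 0 i].

Lemma measurable_box a b : measurable (box a b : set (Rn R n)).
Proof.
have -> : box a b = \bigcap_(i in [set: 'I_n])
    (~` [set x : 'rV[R]_n | x 0 i < a 0 i] `&` [set x | x 0 i < b 0 i]).
  apply/seteqP; split => x /= xab => [i _|i].
    by have /andP[] := xab i; rewrite leNgt => /negP.
  by have [/negP] := xab i I; rewrite -leNgt => ->.
have open_lt_coord i c : open [set x : 'rV[R]_n | x 0 i < c].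
  rewrite -[X in open X]/((fun x : 'rV[R]_n => x 0 i) @^-1` [set u | u < c]).
  by apply: open_comp; [move=> x _; exact: coord_continuous | exact: open_lt].
apply: fin_bigcap_measurable => [|i _]; first exact: finite_finset.
by apply: measurableI; [apply: measurableC|]; apply: sub_sigma_algebra; exact: open_lt_coord.
Qed.

End Balls.

Section LebesgueBalls.
Context {R : realType} {n : nat} (mu : {measure set (Rn R n) -> \bar R}).
Hypothesis mu_leb : is_lebesgue mu.
Implicit Types (a b y : 'rV[R]_n) (r : R).
Local Notation leb := (@leb R n mu).
Local Open Scope ereal_scope.

Lemma measurable_eball y r : measurable (eball y r : set (LRn mu)).
Proof.
apply: (@caratheodory_measurable_mu_ext _ R (Rn R n) mu).
by apply: sub_sigma_algebra; exact: eball_open.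
Qed.

Lemma leb_box a b : (forall i, (a 0 i <= b 0 i)%R) ->
  leb (box a b) = (\prod_(i < n) (b 0 i - a 0 i))%:E.
Proof.
move=> ab; rewrite /leb /completed_measure_extension.
rewrite measurable_mu_extE; last exact: measurable_box.
exact: mu_leb.
Qed.

Lemma leb_eball_gt0 y r : (0 < r)%R -> 0 < leb (eball y r).
Proof.
move=> r0; set c := (r / n.+1%:R)%R.
have c0 : (0 < c)%R by rewrite divr_gt0.
pose a := (\row_i (y 0 i - c))%R; pose b := (\row_i (y 0 i + c))%R.
have ab i : (a 0 i <= b 0 i)%R by rewrite !mxE; lra.
apply: (lt_le_trans _ (le_mu_ext mu (_ : box a b `<=` eball y r))) => [|x xab].
  move: (leb_box ab); rewrite /leb /completed_measure_extension => ->.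
  by rewrite lte_fin prodr_gt0 // => i _; rewrite !mxE; lra.
apply: enorm_lt_coord => // i; rewrite !mxE ler_norml.
by have /andP[] := xab i; rewrite !mxE -/c; lra.
Qed.

Lemma leb_eball_lt_oo y r : leb (eball y r) < +oo.
Proof.
pose a := (\row_i (y 0 i - `|r|))%R; pose b := (\row_i (y 0 i + `|r|))%R.
have ab i : (a 0 i <= b 0 i)%R by rewrite !mxE; have := normr_ge0 r; lra.
apply: (le_lt_trans (le_mu_ext mu (_ : eball y r `<=` box a b))) => [x xB i|].
  have := enorm_coord (x - y) i; have := ler_norm r; rewrite /eball /= in xB.
  by rewrite !mxE ler_norml; lra.
by move: (leb_box ab); rewrite /leb /completed_measure_extension => ->; exact: ltry.
Qed.

End LebesgueBalls.

Section BanachFunctionNorm.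
Context {R : realType} {n : nat} (mu : {measure set (Rn R n) -> \bar R}).
Local Notation T := (LRn mu).
Local Notation leb := (@leb R n mu).
Local Notation chi := (@chi R n mu).
Local Notation Mplus := (@Mplus R n mu).
Implicit Types (A B : set 'rV[R]_n) (f g : T -> \bar R) (c r : R) (y z : 'rV[R]_n).
Local Open Scope ereal_scope.

Lemma chi_in A x : A x -> chi A x = 1.
Proof. by move=> Ax; rewrite /chi indicE mem_set. Qed.

Lemma chi_notin A x : ~ A x -> chi A x = 0.
Proof. by move=> Ax; rewrite /chi indicE memNset. Qed.

Lemma chi_ge0 A x : 0 <= chi A x.
Proof. by rewrite lee_fin indicE. Qed.

Lemma Mplus0 : Mplus (fun _ => 0).
Proof. by split; [exact: measurable_cst | move=> x]. Qed.

Lemma Mplus_chi A : measurable (A : set T) -> Mplus (chi A).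
Proof.
by move=> mA; split=> [|x]; [exact/measurable_EFinP/measurable_indic | exact: chi_ge0].
Qed.

Lemma MplusZ c f : (0 <= c)%R -> Mplus f -> Mplus (fun x => c%:E * f x).
Proof.
move=> c0 [mf f0]; split => [|x]; last by rewrite mule_ge0.
by apply: emeasurable_funM => //; exact: measurable_cst.
Qed.

Lemma Mplus_sum (I : Type) (s : seq I) (F : I -> T -> \bar R) :
  (forall i, Mplus (F i)) -> Mplus (fun x => \sum_(i <- s) F i x).
Proof.
move=> MF; split => [|x]; last by apply: sume_ge0 => i _; case: (MF i) => _; apply.
by apply: emeasurable_sum => i; case: (MF i).
Qed.

Lemma Mplus_Xnorm_chi (w : T -> \bar R) A : measurable (A : set T) ->
  measurable_fun [set: T] w -> (forall x, 0 <= w x) ->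
  Mplus (fun x => `|chi A x| * w x).
Proof.
move=> mA mw w0; split => [|x]; last by rewrite mule_ge0.
apply: emeasurable_funM => //; apply: measurableT_comp; first exact: abse_measurable.
by case: (Mplus_chi mA).
Qed.

Variable rho : (T -> \bar R) -> \bar R.
Hypothesis rho_bfn : banach_function_norm rho.

Lemma rho0 : rho (fun _ => 0) = 0.
Proof. by case: rho_bfn => A1 _ _ _ _; apply/(A1 _ Mplus0); exact: aeW. Qed.

Lemma le_rho f g : Mplus f -> Mplus g -> (forall x, f x <= g x) -> rho f <= rho g.
Proof. by case: rho_bfn => _ _ _ A2 _ Mf Mg fg; apply: A2 => //; exact: aeW. Qed.

Lemma rho_ge0 f : Mplus f -> 0 <= rho f.
Proof. by move=> [mf f0]; rewrite -rho0; apply: le_rho => //; exact: Mplus0. Qed.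

Lemma rhoZ c f : (0 <= c)%R -> Mplus f -> rho (fun x => c%:E * f x) = c%:E * rho f.
Proof. by case: rho_bfn => _ A1Z _ _ _ c0 Mf; exact: A1Z. Qed.

Lemma rho_sum_le (I : Type) (s : seq I) (F : I -> T -> \bar R) :
  (forall i, Mplus (F i)) ->
  rho (fun x => \sum_(i <- s) F i x) <= \sum_(i <- s) rho (F i).
Proof.
case: rho_bfn => _ _ A1D _ _ MF; elim: s => [|i s IHs].
  by under eq_fun do rewrite big_nil; rewrite big_nil rho0.
under eq_fun do rewrite big_cons; rewrite big_cons.
apply: (le_trans (A1D _ _ (MF i) (Mplus_sum s MF))).
exact: leeD2l.
Qed.

(* A1: [rho (chi A) = 0] would make [chi A] vanish almost everywhere. *)
Lemma rho_chi_gt0 A : measurable (A : set T) -> 0 < leb A -> 0 < rho (chi A).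
Proof.
move=> mA A0; have := rho_ge0 (Mplus_chi mA); rewrite le_eqVlt => /predU1P[|//].
case: rho_bfn => A1 _ _ _ _ /esym/(A1 _ (Mplus_chi mA)) [N [_ N0 AN]].
have : leb A <= leb N.
  apply: le_mu_ext => x Ax; apply: AN => /=.
  by rewrite chi_in // => /eqP; rewrite onee_eq0.
by rewrite N0 leNgt A0.
Qed.

Hypothesis Y_ti : translation_invariant rho.

Lemma rho_chi_eball_translate y z r : rho (chi (eball y r)) < +oo ->
  rho (chi (eball z r)) = rho (chi (eball y r)).
Proof.
move=> fin; have mB : measurable_fun [set: T] (\1_(eball y r) : T -> R).
  exact/measurable_indic/measurable_eball.
have chiE : (fun x : T => (`|(\1_(eball y r) : T -> R) x|)%:E) = chi (eball y r).
  by apply/funext => x; rewrite ger0_norm.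
have chi_shiftE : (fun x : T => (`|(\1_(eball y r) : T -> R) (x - (z - y))%R|)%:E)
    = chi (eball z r).
  apply/funext => x; rewrite ger0_norm // /chi !indicE.
  suff -> : (((x : 'rV[R]_n) - (z - y))%R \in eball y r) =
    ((x : 'rV[R]_n) \in eball z r) by [].
  by apply/idP/idP; rewrite !in_setE /eball /= opprB addrA addrAC addrK.
by rewrite -chiE -chi_shiftE Y_ti // chiE.
Qed.

Hypothesis mu_leb : is_lebesgue mu.

Lemma rho_chi_eball r : (0 < r)%R ->
  exists q : R, (0 < q)%R /\ forall y, rho (chi (eball y r)) = q%:E.
Proof.
move=> r0; have mB := measurable_eball mu 0 r.
have fin : rho (chi (eball 0 r)) < +oo.
  by case: rho_bfn => _ _ _ _ [_ A4 _]; apply: A4 => //; exact: leb_eball_lt_oo.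
have pos := rho_chi_gt0 mB (leb_eball_gt0 mu_leb 0 r0).
exists (fine (rho (chi (eball 0 r)))); split => [|y].
  by rewrite -lte_fin fineK // ge0_fin_numE // ltW.
by rewrite (rho_chi_eball_translate y fin) fineK // ge0_fin_numE // ltW.
Qed.

Variable w : T -> \bar R.
Hypotheses (mw : measurable_fun [set: T] w) (w_ge0 : forall x, 0 <= w x).

Lemma Xnorm_chi_le A c : measurable (A : set T) -> (0 <= c)%R ->
  (forall x, A x -> w x <= c%:E) -> Xnorm rho w (chi A) <= c%:E * rho (chi A).
Proof.
move=> mA c0 wc; rewrite -(rhoZ c0 (Mplus_chi mA)).
apply: le_rho => [||x]; [exact: Mplus_Xnorm_chi|exact/MplusZ/Mplus_chi|].
have [Ax|Ax] := pselect (A x); last by rewrite chi_notin // abse0 mul0e mule0.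
by rewrite chi_in // abse1 mul1e mule1; exact: wc.
Qed.

Lemma Xnorm_chi_ge A B c : measurable (A : set T) -> measurable (B : set T) ->
  (0 <= c)%R -> A `<=` B -> (forall x, A x -> c%:E <= w x) ->
  c%:E * rho (chi A) <= Xnorm rho w (chi B).
Proof.
move=> mA mB c0 AB cw; rewrite -(rhoZ c0 (Mplus_chi mA)).
apply: le_rho => [||x]; [exact/MplusZ/Mplus_chi|exact: Mplus_Xnorm_chi|].
have [Ax|Ax] := pselect (A x); last by rewrite chi_notin // mule0 mule_ge0.
by rewrite !chi_in ?abse1 ?mul1e ?mule1 ?cw //; exact: AB.
Qed.

End BanachFunctionNorm.

Definition grid_index (n : nat) := {ffun 'I_n -> 'I_(4 * n.+1).+1}.

Section Grid.
Context {R : realType} {n : nat}.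

(* Points of the grid [y + h Z^n] within sup-distance [2 (n + 1) h] of [y]. *)
Definition grid_point (y : 'rV[R]_n) (h : R) (k : grid_index n) : 'rV[R]_n :=
  \row_i (y 0 i + h * ((k i)%:R - (2 * n.+1)%:R)).

Lemma eball_grid_cover (y x : 'rV[R]_n) r : 0 < r -> eball y (2 * r) x ->
  exists k, eball (grid_point y (r / n.+1%:R) k) r x.
Proof.
move=> r0 xy; set h := r / n.+1%:R; set m := (2 * n.+1)%N.
have h0 : 0 < h by rewrite divr_gt0.
have mh : m%:R * h = 2 * r.
  by rewrite /h natrM -mulrA [n.+1%:R * _]mulrC divfK // pnatr_eq0.
pose u i := (x 0 i - y 0 i) / h + m%:R + 2^-1.
have xyu i : x 0 i - y 0 i = h * (u i - m%:R - 2^-1) by rewrite /u; field; rewrite gt_eqF.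
have u_itv i : 0 <= u i < (4 * n.+1).+1%:R.
  have : `|x 0 i - y 0 i| < m%:R * h.
    by rewrite mh; apply: le_lt_trans xy; have := enorm_coord (x - y) i; rewrite !mxE.
  rewrite xyu normrM (gtr0_norm h0) mulrC ltr_pM2r // ltr_norml => /andP[u1 u2].
  have -> : (4 * n.+1 = 2 * m)%N by rewrite /m mulnA.
  by rewrite -natr1 natrM; apply/andP; split; lra.
exists [ffun i => inord (Num.truncn (u i))].
apply: enorm_lt_coord => // i; have /andP[u0 u1] := u_itv i.
rewrite !mxE ffunE inordK; last by rewrite ltnS -ltnS truncn_lt_nat.
have /andP[t1 t2] := truncn_itv u0.
rewrite opprD addrA xyu -mulrBr normrM (gtr0_norm h0) -[X in _ <= X]mulr1 ler_pM2l //.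
by move: t2; rewrite -natr1 ler_norml /m => t2; apply/andP; split; lra.
Qed.

End Grid.

Section Doubling.
Context {R : realType} {n : nat} (mu : {measure set (Rn R n) -> \bar R}).
Local Notation T := (LRn mu).
Local Notation chi := (@chi R n mu).
Variable rho : (T -> \bar R) -> \bar R.
Hypotheses (rho_bfn : banach_function_norm rho) (Y_ti : translation_invariant rho).
Hypothesis mu_leb : is_lebesgue mu.
Local Open Scope ereal_scope.

Lemma rho_chi_eball_double (y : 'rV[R]_n) (r : R) : (0 < r)%R ->
  rho (chi (eball y (2 * r))) <= #|{: grid_index n}|%:R%:E * rho (chi (eball y r)).
Proof.
move=> r0; have [q [q0 rq]] := rho_chi_eball rho_bfn Y_ti mu_leb r0.
pose B k := eball (grid_point y (r / n.+1%:R) k) r.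
have MB k : Mplus (chi (B k)) by exact/Mplus_chi/measurable_eball.
apply: (le_trans (y := rho (fun x => \sum_(k : grid_index n) chi (B k) x))).
  apply: (le_rho rho_bfn) => [||x]; [exact/Mplus_chi/measurable_eball|exact: Mplus_sum|].
  have [xy|xy] := pselect (eball y (2 * r) x); last first.
    by rewrite chi_notin //; apply: sume_ge0 => k _; exact: chi_ge0.
  have [k xk] := eball_grid_cover r0 xy.
  rewrite chi_in // (bigD1 k) //= chi_in //; apply: leeDl.
  by apply: sume_ge0 => j _; exact: chi_ge0.
apply: (le_trans (rho_sum_le rho_bfn _ MB)).
rewrite (eq_bigr (fun=> q%:E)) => [|k _]; last exact: rq.
by rewrite sumEFin sumr_const rq -EFinM mulr_natl.
Qed.

End Doubling.

Lemma lee_div_fin {R : realType} (a b : \bar R) (u v : R) : 0 < v ->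
  (0 <= a)%E -> (a <= u%:E)%E -> (v%:E <= b)%E -> (a / b <= (u / v)%:E)%E.
Proof.
move=> v0 a0 au vb; have u0 : 0 <= u by rewrite -lee_fin (le_trans a0 au).
case: b vb => [b||//] vb; last by rewrite invey mule0 lee_fin divr_ge0 // ltW.
rewrite lee_fin in vb; have b0 : 0 < b by exact: lt_le_trans vb.
case: a a0 au => [a||//] a0 au; last by move: au; rewrite leye_eq.
rewrite lee_fin in a0 au; rewrite inver gt_eqF // -EFinM lee_fin.
apply: (le_trans (y := a / v)); first by rewrite ler_wpM2l // lef_pV2 // posrE.
by rewrite ler_wpM2r // invr_ge0 ltW.
Qed.

Lemma weak_doubling_of_ratio {R : realType} {n : nat}
    (chinorm : set 'rV[R]_n -> \bar R) (tau M : R) : 1 < tau ->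
  (forall r, 1 <= r -> exists y,
     (chinorm (eball y (tau * r)) / chinorm (eball y r) <= M%:E)%E) ->
  weak_doubling chinorm.
Proof.
move=> tau1 ratio; exists tau; split => //; apply: (le_lt_trans _ (ltry M)).
apply: ge_ereal_sup => _ [r0 _ <-]; set r := Num.max r0 1.
have r1 : 1 <= r by rewrite le_max lexx orbT.
have [y ry] := ratio r r1.
apply: le_trans (ereal_inf_lbound _) _; first by exists r => //=; rewrite le_max lexx.
by apply: le_trans ry; apply: ereal_inf_lbound; exists y.
Qed.

Section WeightedSpace.
Context {R : realType} {n : nat} (mu : {measure set (Rn R n) -> \bar R}).
Local Notation T := (LRn mu).
Local Notation chi := (@chi R n mu).
Variable rho : (T -> \bar R) -> \bar R.
Hypotheses (rho_bfn : banach_function_norm rho) (Y_ti : translation_invariant rho).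
Hypothesis mu_leb : is_lebesgue mu.

Variable phi : R -> R.
Hypothesis phi_noninc : forall r s : R, 0 < r -> r <= s -> phi s <= phi r.
Hypothesis phi_lim : phi x @[x --> +oo] --> 0.
Hypothesis phi_rphi : forall r s : R, 1 <= r -> r <= s -> r * phi r <= s * phi s.

Lemma rphi_shift_le s : 0 < s ->
  \forall t \near +oo, (t + s) * phi (t + s) <= (t - s) * phi (t - s) + 1.
Proof.
move=> s0; have e0 : 0 < (2 * s)^-1 by rewrite invr_gt0 mulr_gt0.
have [M [_ phiM]] := cvgr_lt 0 phi_lim _ e0.
near=> t.
have [tM ts0] : M < t - s /\ 0 < t - s.
  apply/andP; rewrite -gt_max; near: t.
  by apply: filterS (nbhs_pinfty_gt (num_real (Num.max M 0 + s))) => x; lra.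
have phi_ts : phi (t - s) < (2 * s)^-1 by exact: phiM.
have phi_mono : phi (t + s) <= phi (t - s) by apply: phi_noninc; lra.
have inv2s : 2 * s * (2 * s)^-1 = 1 by rewrite divff // gt_eqF // mulr_gt0.
nra.
Unshelve. all: by end_near.
Qed.

Variable w : T -> \bar R.
Hypotheses (mw : measurable_fun [set: T] w) (w_ge0 : forall x, (0 <= w x)%E).
Variables (C0 C1 gamma : R) (theta : 'rV[R]_n).
Hypotheses (C0_gt0 : 0 < C0) (C1_gt0 : 0 < C1) (gamma_gt0 : 0 < gamma).
Hypothesis theta1 : enorm theta = 1.
Hypothesis w_cone : forall x : 'rV[R]_n, 1 <= enorm x ->
  enorm ((enorm x)^-1 *: x - theta) < gamma ->
  ((C0 * expR (enorm x * phi (enorm x)))%:E <= w x)%E /\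
  (w x <= (C1 * expR (enorm x * phi (enorm x)))%:E)%E.

Lemma weight_far_ball t s (x : 'rV[R]_n) : 0 < s -> 1 + s <= t ->
  2 * s <= gamma * t -> eball (t *: theta) s x ->
  ((C0 * expR ((t - s) * phi (t - s)))%:E <= w x)%E /\
  (w x <= (C1 * expR ((t + s) * phi (t + s)))%:E)%E.
Proof.
move=> s0 st sgt xB; have t0 : 0 < t by lra.
have s_t : 0 < s < t by apply/andP; split; lra.
have [xl xu xdir] := eball_ray theta1 s_t xB.
have x1 : 1 <= enorm x by lra.
have xcone : enorm ((enorm x)^-1 *: x - theta) < gamma.
  by apply: lt_le_trans xdir _; rewrite ler_pdivrMr.
have [wl wu] := w_cone x1 xcone.
split; [apply: le_trans wl | apply: le_trans wu _];
  rewrite lee_fin ?ler_pM2l // ler_expR; apply: phi_rphi; lra.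
Qed.

Lemma Xnorm_chi_eball_ratio_le r t : 0 < r -> 1 + 2 * r <= t ->
  2 * (2 * r) <= gamma * t ->
  (t + 2 * r) * phi (t + 2 * r) <= (t - 2 * r) * phi (t - 2 * r) + 1 ->
  (Xnorm rho w (chi (eball (t *: theta) (2 * r))) /
   Xnorm rho w (chi (eball (t *: theta) r)) <=
   (C1 * expR 1 * #|{: grid_index n}|%:R / C0)%:E)%E.
Proof.
move=> r0 t1 t2 t3; have r20 : 0 < 2 * r by lra.
have [q [q0 rq]] := rho_chi_eball rho_bfn Y_ti mu_leb r0.
set N : R := #|{: grid_index n}|%:R; set E := expR ((t - 2 * r) * phi (t - 2 * r)).
have E0 : 0 < E := expR_gt0 _.
have w_far x := weight_far_ball r20 t1 t2 (x := x).
have rB2 x : eball (t *: theta) r x -> eball (t *: theta) (2 * r) x.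
  by rewrite /eball /=; lra.
have -> : C1 * expR 1 * N / C0 = C1 * expR 1 * E * (N * q) / (C0 * E * q).
  by field; rewrite !gt_eqF.
apply: lee_div_fin.
- by rewrite !mulr_gt0.
- rewrite /Xnorm; apply: (rho_ge0 rho_bfn); apply: Mplus_Xnorm_chi => //.
  exact: measurable_eball.
- have c1_ge0 : 0 <= C1 * expR 1 * E by rewrite !mulr_ge0 // ltW.
  apply: (le_trans (Xnorm_chi_le rho_bfn mw w_ge0 (measurable_eball mu _ _) c1_ge0 _)).
    move=> x /w_far[_ wu]; apply: (le_trans wu).
    by rewrite lee_fin -mulrA ler_pM2l // /E -expRD ler_expR; lra.
  rewrite [X in (_ <= X)%E]EFinM lee_wpmul2l ?lee_fin // EFinM -(rq (t *: theta)).
  exact: rho_chi_eball_double.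
- have c0_ge0 : 0 <= C0 * E by rewrite mulr_ge0 // ltW.
  have mB := measurable_eball mu (t *: theta) r.
  apply: (le_trans _ (Xnorm_chi_ge rho_bfn mw w_ge0 mB mB c0_ge0 _ _)) => [|//|x xB].
    by rewrite rq -EFinM.
  by have [wl _] := w_far x (rB2 x xB).
Qed.

Lemma Xnorm_weak_doubling : weak_doubling (fun A => Xnorm rho w (chi A)).
Proof.
apply: (weak_doubling_of_ratio (tau := 2)) => [|r r1]; first lra.
near (pinfty_nbhs R) => t.
exists (t *: theta); apply: Xnorm_chi_eball_ratio_le; first lra.
- by near: t; exact: nbhs_pinfty_ge (num_real _).
- near: t; apply: filterS (nbhs_pinfty_ge (num_real (2 * (2 * r) / gamma))) => t.
  by rewrite ler_pdivrMr // [t * _]mulrC.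
- by near: t; apply: rphi_shift_le; lra.
Unshelve. all: by end_near.
Qed.

Lemma Xnorm_chi_eball0_ge : exists C, 0 < C /\ exists R0, forall r, R0 <= r ->
  ((C * expR (r * phi r))%:E <= Xnorm rho w (chi (eball 0 r)))%E.
Proof.
pose m := Num.min gamma 1; pose d := m / 2.
have m0 : 0 < m by rewrite lt_min gamma_gt0 ltr01.
have [m_gamma m1] : m <= gamma /\ m <= 1 by split; rewrite ge_min lexx ?orbT.
have d0 : 0 < d by rewrite divr_gt0.
have dm : 2 * d = m by rewrite /d mulrC divfK.
have [q [q0 rq]] := rho_chi_eball rho_bfn Y_ti mu_leb d0.
exists (C0 * expR (- (2 * d * phi 1)) * q); split; first by rewrite !mulr_gt0 ?expR_gt0.
exists 2 => r r2; set y := (r - d) *: theta.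
have mB := measurable_eball mu y d.
have c_ge0 : 0 <= C0 * expR (r * phi r - 2 * d * phi 1) by rewrite mulr_ge0 // ltW.
apply: (le_trans _ (Xnorm_chi_ge rho_bfn mw w_ge0 mB (measurable_eball mu 0 r) c_ge0 _ _)).
- have -> : C0 * expR (- (2 * d * phi 1)) * q * expR (r * phi r) =
      C0 * expR (r * phi r - 2 * d * phi 1) * q by rewrite expRD; ring.
  by rewrite rq -EFinM.
- move=> x; rewrite /eball /= subr0 => xy.
  have := enormD (x - y) y; rewrite subrK enormZ theta1 mulr1 ger0_norm; lra.
- move=> x xB; have d1 : 1 + d <= r - d by lra.
  have d_gamma : 2 * d <= gamma * (r - d) by nra.
  have [wl _] := weight_far_ball d0 d1 d_gamma xB.
  apply: le_trans wl; rewrite lee_fin ler_pM2l // ler_expR.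
  have phi_r : phi r <= phi (r - d - d) by apply: phi_noninc; lra.
  have phi_1 : phi r <= phi 1 by apply: phi_noninc; lra.
  nra.
Qed.

End WeightedSpace.

Theorem lemma3p10 (R : realType) (n : nat)
  (mu : {measure set (Rn R n) -> \bar R}) (mu_leb : is_lebesgue mu)
  (rho : (LRn mu -> \bar R) -> \bar R)
  (rho_bfn : banach_function_norm rho)
  (Y_ti : translation_invariant rho)
  (phi : R -> R)
  (phi_noninc : forall r s : R, 0 < r -> r <= s -> phi s <= phi r)
  (phi_lim : phi x @[x --> +oo] --> 0)
  (phi_rphi : forall r s : R, 1 <= r -> r <= s -> r * phi r <= s * phi s)
  (w : LRn mu -> \bar R)
  (w_weight : weight w)
  (w_loc : Linf_loc w)
  (winv_loc : Linf_loc (fun x => (w x)^-1%E))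
  (w_cone : exists (C0 C1 gamma : R) (theta : 'rV[R]_n),
     [/\ 0 < C0, 0 < C1, 0 < gamma, enorm theta = 1 &
      forall x : 'rV[R]_n, 1 <= enorm x ->
        enorm ((enorm x)^-1 *: x - theta) < gamma ->
        ((C0 * expR (enorm x * phi (enorm x)))%:E <= w x)%E /\
        (w x <= (C1 * expR (enorm x * phi (enorm x)))%:E)%E]) :
  weak_doubling (fun A => Xnorm rho w (chi A)) /\
  exists C : R, 0 < C /\ exists R0 : R, forall r : R, R0 <= r ->
    ((C * expR (r * phi r))%:E <= Xnorm rho w (chi (eball 0 r)))%E.
Proof.
case: w_weight => mw w_ge0 _.
have [C0 [C1 [gamma [theta [C0_gt0 C1_gt0 gamma_gt0 theta1 w_cone']]]]] := w_cone.
split.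
- exact: (Xnorm_weak_doubling rho_bfn Y_ti mu_leb phi_noninc phi_lim phi_rphi mw
    w_ge0 C0_gt0 C1_gt0 gamma_gt0 theta1 w_cone').
- exact: (Xnorm_chi_eball0_ge rho_bfn Y_ti mu_leb phi_noninc phi_rphi mw
    w_ge0 C0_gt0 C1_gt0 gamma_gt0 theta1 w_cone').
Qed.
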